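(* Outer Multi-Objective RL (OMORL), Functions from Occupancy Measures to Reals (FOMR) and Functions from Trajectory Lotteries to Reals (FTLR) are equally expressive: for every environment $E$, $\mathrm{Ord}_{\mathrm{OMORL}}(E)=\mathrm{Ord}_{\mathrm{FOMR}}(E)=\mathrm{Ord}_{\mathrm{FTLR}}(E)$.
   Context: An environment is a tuple $E=(\mathcal S,\mathcal A,\mathcal T,\mathcal I)$ where $\mathcal S,\mathcal A$ are finite nonempty sets, $\mathcal T:\mathcal S\times\mathcal A\to\Delta(\mathcal S)$ and $\mathcal I\in\Delta(\mathcal S)$. A policy is a map $\pi:\mathcal S\to\Delta(\mathcal A)$ (stationary, possibly stochastic); $\Pi^E$ denotes the set of all policies. A trajectory $\xi=(s_0,a_0,s_1,a_1,\dots)$ is generated under $\pi$ by $s_0\sim\mathcal I$, $a_t\sim\pi(s_t)$, $s_{t+1}\sim\mathcal T(s_t,a_t)$; $\mathbb E^\pi_\xi,\mathbb P^\pi$ denote expectation and probability under this distribution. An objective-specification formalism $X$ assigns to each environment $E$ a set of objective specifications, each inducing a total preorder $\succeq$ on $\Pi^E$; $\mathrm{Ord}_X(E)$ is the set of total preorders so induced. A specification defining a scalar $J:\Pi^E\to\mathbb R$ induces $\pi_1\succeq\pi_2\iff J(\pi_1)\ge J(\pi_2)$. Occupancy measure: for $\gamma\in[0,1)$, $\vec m_\gamma(\pi)\in\mathbb R^{\mathcal S\times\mathcal A\times\mathcal S}$, $\vec m_\gamma(\pi)[s,a,s']=\sum_{t=0}^\infty\gamma^t\,\mathbb P^\pi[s_t=s,a_t=a,s_{t+1}=s']$,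 and $\vec m_\gamma(\Pi^E)=\{\vec m_\gamma(\pi):\pi\in\Pi^E\}$. Trajectory lottery: $L_{k,\pi}$ is the distribution of $(s_0,a_0,\dots,a_{k-1},s_k)$ under $\pi$, $L_\pi=(L_{0,\pi},L_{1,\pi},\dots)$, and $L_{\Pi^E}=\{L_\pi:\pi\in\Pi^E\}$. OMORL: specification $(k,\mathcal R,f,\gamma)$ with $k\in\mathbb N$, $\mathcal R:\mathcal S\times\mathcal A\times\mathcal S\to\mathbb R^k$ with components $\mathcal R_i$, $f:\mathbb R^k\to\mathbb R$, $\gamma\in[0,1)$; $J(\pi)=f(J_1(\pi),\dots,J_k(\pi))$ with $J_i(\pi)=\mathbb E^\pi_\xi[\sum_{t=0}^\infty\gamma^t\mathcal R_i(s_t,a_t,s_{t+1})]$. FOMR: specification $(f,\gamma)$ with $\gamma\in[0,1)$, $f:\vec m_\gamma(\Pi^E)\to\mathbb R$; $J(\pi)=f(\vec m_\gamma(\pi))$. FTLR: specification $(f)$ with $f:L_{\Pi^E}\to\mathbb R$; $J(\pi)=f(L_\pi)$. *)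

From HB Require Import structures.
From mathcomp Require Import all_boot all_order all_algebra.
From mathcomp Require Import all_classical all_reals all_analysis.
From mathcomp Require Import Rstruct Rstruct_topology.

Set Implicit Arguments.
Unset Strict Implicit.
Unset Printing Implicit Defensive.

Import Order.TTheory GRing.Theory Num.Theory.
Local Open Scope ring_scope.

Notation R := Rdefinitions.R.

Definition is_dist (X : finType) (p : X -> R) : Prop :=
  (forall x, 0 <= p x) /\ \sum_(x : X) p x = 1.

Record env := Env {
  st : finType;
  ac : finType;
  st_inh : st;
  ac_inh : ac;
  trans : st -> ac -> st -> R;
  init : st -> R;
  trans_dist : forall s a, is_dist (trans s a);
  init_dist : is_dist init
}.
Arguments trans : clear implicits.
Arguments init : clear implicits.

Definition infsum (u : nat -> R) : R := limn (fun n => \sum_(0 <= t < n) u t).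

Definition policy (E : env) := {q : st E -> ac E -> R | forall s, is_dist (q s)}.

Definition pol (E : env) (p : policy E) : st E -> ac E -> R := proj1_sig p.

(* A trajectory prefix (s_0, a_0, ..., a_{k-1}, s_k). *)
Definition prefix (E : env) (k : nat) : finType :=
  ({ffun 'I_k.+1 -> st E} * {ffun 'I_k -> ac E})%type.

Definition prefix_prob (E : env) (p : policy E) (k : nat) (x : prefix E k) : R :=
  init E (x.1 ord0) *
  \prod_(t < k) (pol p (x.1 (inord t)) (x.2 t) *
                 trans E (x.1 (inord t)) (x.2 t) (x.1 (inord t.+1))).

Definition lottery (E : env) := forall k : nat, prefix E k -> R.

Definition lott (E : env) (p : policy E) : lottery E := fun k => prefix_prob p (k := k).

Definition stepP (E : env) (p : policy E) (t : nat) (s : st E) (a : ac E) (s' : st E) : R :=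
  \sum_(x : prefix E t.+1 |
         (x.1 (inord t) == s) && (x.2 (inord t) == a) && (x.1 (inord t.+1) == s'))
     prefix_prob p x.

Definition occ (E : env) (g : R) (p : policy E) : st E -> ac E -> st E -> R :=
  fun s a s' => infsum (fun t => g ^+ t * stepP p t s a s').

(* Expected discounted return E^pi[sum_t g^t r(s_t,a_t,s_{t+1})], written as
   sum_t g^t E^pi[r(s_t,a_t,s_{t+1})]. *)
Definition disc_return (E : env) (g : R) (r : st E -> ac E -> st E -> R)
  (p : policy E) : R :=
  infsum (fun t => g ^+ t * \sum_(s : st E) \sum_(a : ac E) \sum_(s' : st E)
                          stepP p t s a s' * r s a s').

Definition induced (E : env) (J : policy E -> R) : policy E -> policy E -> Prop :=
  fun p q => J q <= J p.

Definition discount_ok (g : R) : Prop := 0 <= g /\ g < 1.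

Definition Ord_OMORL (E : env) : (policy E -> policy E -> Prop) -> Prop :=
  fun ord => exists (k : nat) (rw : 'I_k -> st E -> ac E -> st E -> R)
                    (f : 'rV[R]_k -> R) (g : R),
    discount_ok g /\
    ord = induced (fun p => f (\row_(i < k) disc_return g (rw i) p)).

Definition occ_set (E : env) (g : R) :=
  {m : st E -> ac E -> st E -> R | exists p : policy E, m = occ g p}.

Definition occ_in (E : env) (g : R) (p : policy E) : occ_set E g :=
  exist _ (occ g p) (ex_intro _ p erefl).

Definition Ord_FOMR (E : env) : (policy E -> policy E -> Prop) -> Prop :=
  fun ord => exists (g : R) (f : occ_set E g -> R),
    discount_ok g /\ ord = induced (fun p => f (occ_in g p)).

Definition lott_set (E : env) := {L : lottery E | exists p : policy E, L = lott p}.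

Definition lott_in (E : env) (p : policy E) : lott_set E :=
  exist _ (lott p) (ex_intro _ p erefl).

Definition Ord_FTLR (E : env) : (policy E -> policy E -> Prop) -> Prop :=
  fun ord => exists f : lott_set E -> R, ord = induced (fun p => f (lott_in p)).

Arguments Ord_OMORL : clear implicits.
Arguments Ord_FOMR : clear implicits.
Arguments Ord_FTLR : clear implicits.

(* Each formalism orders policies by a real function of some statistic of the
   policy, so the induced orderings coincide as soon as the statistics determine
   one another around a cycle.  The trajectory lottery determines every
   discounted return, since returns are expectations over finite prefixes.  The
   occupancy measure, for any discount 0 < g < 1, determines the lottery: it
   factors as m(s,a,s') = pi(a|s) T(s,a,s') V(s) with V the discounted state
   visitation (its marginal over (a,s')), V(s) > 0 at every state reached with
   positive probability, and the prefix probabilities only involve pi at such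
   states.  Finally the occupancy measure is the vector of discounted returns of
   the indicator rewards of the transitions (s,a,s'). *)

From mathcomp Require Import all_boot all_order all_algebra.
From mathcomp Require Import all_classical all_reals all_analysis.
From mathcomp Require Import Rstruct Rstruct_topology.
(* Imported last, so that [Defs.prefix] shadows [seq.prefix]. *)
From Pilot Require Import Defs.

Set Implicit Arguments.
Unset Strict Implicit.
Unset Printing Implicit Defensive.

Import Order.TTheory GRing.Theory Num.Theory.
Local Open Scope classical_set_scope.
Local Open Scope ring_scope.

Lemma cvgn_discounted (g : R) (c : nat -> R) : 0 <= g < 1 ->
  (forall t, 0 <= c t <= 1) -> cvgn (series (fun t => g ^+ t * c t)).
Proof.
move=> /andP[g0 g1] c01.
apply: (@series_le_cvg _ _ (geometric 1 g)) => [t|t|t|].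
- by have /andP[c0 _] := c01 t; rewrite mulr_ge0 ?exprn_ge0.
- exact: geometric_ge0.
- by have /andP[_ c1] := c01 t; rewrite /geometric /= mul1r ler_piMr ?exprn_ge0.
- by apply: is_cvg_geometric_series; rewrite ger0_norm.
Qed.

Lemma infsumZ (a : R) (u : nat -> R) : cvgn (series u) ->
  infsum (fun t => a * u t) = a * infsum u.
Proof.
move=> cu; rewrite /infsum (_ : (fun n => _) = (fun n => a * series u n)).
  by apply: cvg_lim; [exact: Rhausdorff | exact: cvgMl_tmp].
by apply: funext => n; rewrite big_distrr.
Qed.

Lemma le_infsum (u : nat -> R) (k : nat) : (forall t, 0 <= u t) ->
  cvgn (series u) -> u k <= infsum u.
Proof.
move=> u0 cu; apply: le_trans (nondecreasing_cvgn_le _ cu k.+1).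
  by rewrite seriesSr lerDr sumr_ge0.
exact: nondecreasing_series.
Qed.

Definition ffun_snoc (T : Type) (n : nat) (f : {ffun 'I_n -> T}) (t : T) :
  {ffun 'I_n.+1 -> T} := [ffun i => oapp f t (unlift ord_max i)].

Definition ffun_init (T : Type) (n : nat) (f : {ffun 'I_n.+1 -> T}) :
  {ffun 'I_n -> T} := [ffun i => f (lift ord_max i)].

Lemma ffun_snoc_lift (T : Type) n (f : {ffun 'I_n -> T}) t i :
  ffun_snoc f t (lift ord_max i) = f i.
Proof. by rewrite ffunE liftK. Qed.

Lemma ffun_snoc_max (T : Type) n (f : {ffun 'I_n -> T}) t :
  ffun_snoc f t ord_max = t.
Proof. by rewrite ffunE unlift_none. Qed.

Lemma ffun_snocK (T : Type) n (f : {ffun 'I_n.+1 -> T}) :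
  ffun_snoc (ffun_init f) (f ord_max) = f.
Proof. by apply/ffunP => i; rewrite ffunE; case: unliftP => [j ->|->] /=; rewrite ?ffunE. Qed.

Lemma ffun_initK (T : Type) n (f : {ffun 'I_n -> T}) t :
  ffun_init (ffun_snoc f t) = f.
Proof. by apply/ffunP => i; rewrite ffunE ffun_snoc_lift. Qed.

Lemma inord_max (n : nat) : (inord n : 'I_n.+1) = ord_max.
Proof. by apply: val_inj; rewrite /= inordK. Qed.

Lemma lift_max_widen (n : nat) (i : 'I_n) : lift ord_max i = widen_ord (leqnSn n) i.
Proof. by apply: val_inj; exact: lift_max. Qed.

Lemma inord_lift_max (n i : nat) : (i <= n)%N ->
  (inord i : 'I_n.+2) = lift ord_max (inord i : 'I_n.+1).
Proof. by move=> le_in; apply: val_inj; rewrite lift_max_widen /= !inordK // ltnS // ltnW. Qed.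

Section Prefixes.
Variable E : env.

Definition prefix_snoc (k : nat) (x : prefix E k) (a : ac E) (s : st E) : prefix E k.+1 :=
  (ffun_snoc x.1 s, ffun_snoc x.2 a).

Definition prefix_init (k : nat) (y : prefix E k.+1) : prefix E k :=
  (ffun_init y.1, ffun_init y.2).

Lemma prefix_initK (k : nat) (y : prefix E k.+1) :
  prefix_snoc (prefix_init y) (y.2 ord_max) (y.1 ord_max) = y.
Proof. by rewrite /prefix_snoc /= !ffun_snocK -surjective_pairing. Qed.

Lemma sum_prefixS (k : nat) (F : prefix E k.+1 -> R) :
  \sum_(y : prefix E k.+1) F y =
  \sum_(x : prefix E k) \sum_(a : ac E) \sum_(s : st E) F (prefix_snoc x a s).
Proof.
rewrite (reindex (fun z : prefix E k * ac E * st E => prefix_snoc z.1.1 z.1.2 z.2)).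
  by rewrite !pair_bigA.
exists (fun y => (prefix_init y, y.2 ord_max, y.1 ord_max)) => [[[x a] s] _|y _].
  by rewrite /prefix_init /= !ffun_initK !ffun_snoc_max -surjective_pairing.
exact: prefix_initK.
Qed.

Variable p : policy E.

Lemma pol_ge0 s a : 0 <= pol p s a.
Proof. exact: (proj1 (proj2_sig p s) a). Qed.

Lemma sum_pol s : \sum_a pol p s a = 1.
Proof. exact: (proj2 (proj2_sig p s)). Qed.

Lemma prefix_prob_snoc (k : nat) (x : prefix E k) a s :
  prefix_prob p (prefix_snoc x a s) =
  prefix_prob p x * (pol p (x.1 ord_max) a * trans E (x.1 ord_max) a s).
Proof.
rewrite /prefix_prob big_ord_recr /= -!mulrA; congr (_ * (_ * _)).
- by rewrite (_ : ord0 = lift ord_max ord0) ?ffun_snoc_lift //; apply: val_inj.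
- apply: eq_bigr => t _.
  rewrite (inord_lift_max (ltnW (ltn_ord t))) (inord_lift_max (ltn_ord t)) !ffun_snoc_lift.
  by rewrite -lift_max_widen ffun_snoc_lift.
- by rewrite (inord_lift_max (leqnn k)) !inord_max ffun_snoc_lift !ffun_snoc_max.
Qed.

Lemma prefix_prob_ge0 (k : nat) (x : prefix E k) : 0 <= prefix_prob p x.
Proof.
apply: mulr_ge0; first exact: (proj1 (init_dist E)).
by apply: prodr_ge0 => t _; apply: mulr_ge0; [exact: pol_ge0 | exact: (proj1 (trans_dist _ _) _)].
Qed.

Lemma sum_prefix_prob (k : nat) : \sum_(x : prefix E k) prefix_prob p x = 1.
Proof.
elim: k => [|k IH].
  rewrite -(proj2 (init_dist E)).
  rewrite (reindex (fun s => ([ffun => s], ffun0 (card_ord 0)) : prefix E 0)).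
    by apply: eq_bigr => s _; rewrite /prefix_prob big_ord0 mulr1 ffunE.
  exists (fun y : prefix E 0 => y.1 ord0) => [s _|[y1 y2] _]; first by rewrite ffunE.
  congr pair; apply/ffunP => i; first by rewrite ffunE (ord1 i).
  by case: i.
rewrite sum_prefixS -[RHS]IH; apply: eq_bigr => x _.
under eq_bigr do under eq_bigr do rewrite prefix_prob_snoc mulrA.
under eq_bigr do rewrite -big_distrr /= (proj2 (trans_dist _ _)) mulr1.
by rewrite -big_distrr /= sum_pol mulr1.
Qed.
End Prefixes.

Section Occupancy.
Variables (E : env) (p : policy E).

Definition visit_prob (t : nat) (s : st E) : R :=
  \sum_(x : prefix E t | x.1 ord_max == s) prefix_prob p x.

Lemma stepP_visit t s a s' :
  stepP p t s a s' = visit_prob t s * (pol p s a * trans E s a s').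
Proof.
rewrite /stepP /visit_prob big_distrl [RHS]big_mkcond [LHS]big_mkcond sum_prefixS.
apply: eq_bigr => x _.
under eq_bigr do under eq_bigr do
  rewrite (inord_lift_max (leqnn t)) !inord_max ffun_snoc_lift !ffun_snoc_max
          prefix_prob_snoc -andbA -xpair_eqE.
case: eqP => [->|_]; last by rewrite big1 // => b _; rewrite big1.
by rewrite pair_bigA -big_mkcond big_pred1_eq.
Qed.

Lemma prefix_prob_le_visit (k : nat) (x : prefix E k) :
  prefix_prob p x <= visit_prob k (x.1 ord_max).
Proof. by rewrite /visit_prob (bigD1 x) //= lerDl sumr_ge0 // => y _; exact: prefix_prob_ge0. Qed.

Lemma visit_prob_bounds t s : 0 <= visit_prob t s <= 1.
Proof.
rewrite sumr_ge0 /=; last by move=> x _; exact: prefix_prob_ge0.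
rewrite -(sum_prefix_prob p t) [leRHS](bigID (fun x : prefix E t => x.1 ord_max == s)) /=.
by rewrite lerDl sumr_ge0 // => x _; exact: prefix_prob_ge0.
Qed.

Variable g : R.
Hypothesis g01 : 0 <= g < 1.

Definition state_value (s : st E) : R := infsum (fun t => g ^+ t * visit_prob t s).

Lemma occ_visit s a s' : occ g p s a s' = pol p s a * trans E s a s' * state_value s.
Proof.
rewrite /occ /state_value -infsumZ; last exact: cvgn_discounted (visit_prob_bounds^~ s).
by congr infsum; apply: funext => t; rewrite stepP_visit mulrA mulrC.
Qed.

Lemma sum_occ_next s a : \sum_s' occ g p s a s' = pol p s a * state_value s.
Proof.
under eq_bigr do rewrite occ_visit mulrAC.
by rewrite -big_distrr /= (proj2 (trans_dist _ _)) mulr1.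
Qed.

Lemma sum_occ_action_next s : \sum_a \sum_s' occ g p s a s' = state_value s.
Proof. by under eq_bigr do rewrite sum_occ_next; rewrite -big_distrl /= sum_pol mul1r. Qed.

Lemma state_value_gt0 (k : nat) (x : prefix E k) : 0 < g ->
  0 < prefix_prob p x -> 0 < state_value (x.1 ord_max).
Proof.
move=> g_gt0 x_gt0; have vis_gt0 := lt_le_trans x_gt0 (prefix_prob_le_visit x).
apply: lt_le_trans (le_infsum k _ _); first by rewrite mulr_gt0 ?exprn_gt0.
  have /andP[g0 _] := g01.
  by move=> t; have /andP[? _] := visit_prob_bounds t (x.1 ord_max); rewrite mulr_ge0 ?exprn_ge0.
exact: cvgn_discounted (visit_prob_bounds^~ _).
Qed.

End Occupancy.

Lemma occ_determines_prefix_prob (E : env) (g : R) (p q : policy E) :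
  0 < g < 1 -> occ g p = occ g q ->
  forall k (x : prefix E k), prefix_prob p x = prefix_prob q x.
Proof.
move=> /andP[g_gt0 g_lt1] eq_occ; have g01 : 0 <= g < 1 by rewrite ltW.
have eq_value s : state_value p g s = state_value q g s.
  by rewrite -!sum_occ_action_next // eq_occ.
have eq_pol k (x : prefix E k) a : 0 < prefix_prob p x ->
    pol p (x.1 ord_max) a = pol q (x.1 ord_max) a.
  move/(state_value_gt0 g01 g_gt0)/lt0r_neq0/mulIf; apply.
  by rewrite -sum_occ_next // eq_occ sum_occ_next // eq_value.
elim=> [|k IH] y; first by rewrite /prefix_prob !big_ord0.
rewrite -(prefix_initK y) !prefix_prob_snoc -IH.
have [->|nz] := eqVneq (prefix_prob p (prefix_init y)) 0; first by rewrite !mul0r.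
by rewrite eq_pol // lt0r nz prefix_prob_ge0.
Qed.

Lemma disc_return_lott (E : env) (g : R) (r : st E -> ac E -> st E -> R) (p q : policy E) :
  lott p = lott q -> disc_return g r p = disc_return g r q.
Proof. by move=> eq_lott; rewrite /disc_return /stepP -[prefix_prob p]/(lott p) eq_lott. Qed.

Definition indicator_reward (E : env) (v : st E * ac E * st E) : st E -> ac E -> st E -> R :=
  fun s a s' => ((s, a, s') == v)%:R.

Lemma disc_return_indicator (E : env) (g : R) (p : policy E) (v : st E * ac E * st E) :
  disc_return g (indicator_reward v) p = occ g p v.1.1 v.1.2 v.2.
Proof.
rewrite /disc_return /occ; congr infsum; apply: funext => t; congr (_ * _).
rewrite !pair_bigA; under eq_bigr do rewrite mulr_natr mulrb -surjective_pairing.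
by rewrite -big_mkcond big_pred1_eq.
Qed.

Lemma induced_factor (E : env) (T U : Type) (phi : policy E -> T) (psi : policy E -> U)
    (f : T -> R) :
  (forall p q, psi p = psi q -> phi p = phi q) ->
  exists f' : U -> R, induced (fun p => f (phi p)) = induced (fun p => f' (psi p)).
Proof.
move=> psi_phi.
exists (fun u => if pselect (exists p, psi p = u) is left h then f (phi (projT1 (cid h))) else 0).
congr induced; apply: funext => p; case: pselect => [h|[]]; last by exists p.
by case: cid => /= q /psi_phi ->.
Qed.

Section Expressivity.
Variable E : env.

Lemma Ord_OMORL_sub_FTLR : Ord_OMORL E `<=` Ord_FTLR E.
Proof.
move=> _ [k [rw [f [g [_ ->]]]]].
have [|f' ->] := induced_factor f
  (phi := fun p => \row_(i < k) disc_return g (rw i) p) (psi := @lott_in E).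
  2: by exists f'.
move=> p q /(congr1 sval) /= eq_lott; apply/rowP => i; rewrite !mxE.
exact: disc_return_lott.
Qed.

Lemma Ord_FTLR_sub_FOMR : Ord_FTLR E `<=` Ord_FOMR E.
Proof.
(* Any discount in (0, 1) works; with g = 0 the occupancy measure only sees the first step. *)
have g_gt0 : 0 < (2^-1 : R) by rewrite invr_gt0.
have g_lt1 : (2^-1 : R) < 1 by rewrite invf_lt1 ?ltr1n.
have g01 : 0 < (2^-1 : R) < 1 by rewrite g_gt0 g_lt1.
move=> _ [f ->].
have [|f' ->] := induced_factor f (phi := @lott_in E) (psi := @occ_in E 2^-1).
  move=> p q /(congr1 sval) /= /(occ_determines_prefix_prob g01) eq_pp.
  apply: eq_exist; apply: functional_extensionality_dep => k; apply: funext => x.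
  exact: eq_pp.
by exists 2^-1, f'; split => //; split => //; exact: ltW.
Qed.

Lemma Ord_FOMR_sub_OMORL : Ord_FOMR E `<=` Ord_OMORL E.
Proof.
pose rw (i : 'I_#|{: st E * ac E * st E}|) := indicator_reward (enum_val i).
move=> _ [g [f [g01 ->]]].
have [|f' ->] := induced_factor f (phi := @occ_in E g)
  (psi := fun p => \row_i disc_return g (rw i) p).
  move=> p q eq_ret; apply: eq_exist; apply: funext => s; apply: funext => a; apply: funext => s'.
  have := congr1 (fun v : 'rV_#|{: st E * ac E * st E}| => v 0 (enum_rank (s, a, s'))) eq_ret.
  by rewrite /= !mxE !disc_return_indicator enum_rankK.
by exists #|{: st E * ac E * st E}|, rw, f', g.
Qed.

End Expressivity.

Theorem theorem2 (E : env) :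
  Ord_OMORL E = Ord_FOMR E /\ Ord_FOMR E = Ord_FTLR E.
Proof.
have OMORL_FTLR := @Ord_OMORL_sub_FTLR E.
have FTLR_FOMR := @Ord_FTLR_sub_FOMR E.
have FOMR_OMORL := @Ord_FOMR_sub_OMORL E.
split; rewrite eqEsubset; split => //.
- exact: subset_trans OMORL_FTLR FTLR_FOMR.
- exact: subset_trans FOMR_OMORL OMORL_FTLR.
Qed.
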